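(* Let $\mathsf{T}$ be a rooted plane tree, let $\delta\in\mathsf{Pop}(\mathcal{O}(\mathsf{T}))$, let $v\in\mathsf{T}$, and let $u\in M_\delta(v)$. Then $\delta(u)=\{u\}$. Moreover, if $w$ is a child of $v$ with $w\in\delta(v)$ and $u\in\Delta_{\delta(v)}(w)$, then for every integer $k\geq 1$ such that $w\in\mathsf{Pop}^k(\delta)(v)$, the set $\{u\}$ is a bead of the $w$-section of $\mathsf{Pop}^k(\delta)(v)$ in $\mathsf{Pop}^k(\delta)$.
   Context: A rooted plane tree $\mathsf{T}$ is a finite tree with a distinguished root, regarded as a poset $\leq_\mathsf{T}$ in which $v'\leq_\mathsf{T} v$ iff $v$ lies on the path from $v'$ to the root; children of $v$ are nodes covered by $v$. For a set $S$ of nodes and a node $u$, $\Delta_S(u)=\{x\in S:x\leq_\mathsf{T} u\}$. An ornament is a nonempty set of nodes inducing a connected subgraph; an ornamentation is a map $\delta$ from nodes to ornaments such that the unique maximal element of $\delta(v)$ is $v$ and any two sets $\delta(v),\delta(v')$ are nested or disjoint. $\mathcal{O}(\mathsf{T})$ is the set of ornamentations ordered by pointwise inclusion (a lattice with meet given by pointwise intersection); $\mathsf{Pop}(\delta)=\bigwedge(\{\delta\}\cup\{\delta':\delta'\lessdot\delta\})$ and $\mathsf{Pop}^k$ is its $k$-th iterate. For distinct nodes $u,v$, $v$ wraps $u$ in $\delta$ if $\delta(u)\subseteq\delta(v)$ and there is no node $x$ with $\delta(u)\subsetneq\delta(x)\subsetneq\delta(v)$; the reduction of $\delta(v)$ by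 such $u$ is $\delta(v)\setminus\Delta_{\delta(v)}(u)$; a minimal reduction is a reduction not properly contained in another reduction of $\delta(v)$; $M_\delta(v)$ is the set of nodes $u$ wrapped by $v$ such that the reduction of $\delta(v)$ by $u$ is minimal. For an ornamentation $\sigma$, a node $v$ and a child $v'$ of $v$ with $v'\in\sigma(v)$, the $v'$-section of $\sigma(v)$ is $\Delta_{\sigma(v)}(v')$. An ornament $\sigma(x)$ is a bead of this $v'$-section in $\sigma$ if $x\leq_\mathsf{T} v'$, $x\notin\sigma(v)$, and for every node $y$ on the path from $v'$ to $x$ (endpoints included), either $y\in\sigma(v)$ or $\sigma(y)=\{y\}$. *)

From mathcomp Require Import all_boot.
Set Implicit Arguments. Unset Strict Implicit. Unset Printing Implicit Defensive.

(* The plane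
   structure (ordering of children) plays no role in the notions below. *)
Record rtree (T : finType) := RTree {
  root : T;
  parent : T -> T;
  parent_root : parent root = root;
  reach_root : forall x : T, fconnect parent x root
}.

Section Orn.
Variables (T : finType) (t : rtree T).

Definition tle (x y : T) : bool := fconnect (parent t) x y.

Definition child (w v : T) : bool := (parent t w == v) && (w != v).

Definition adjIn (S : {set T}) : rel T :=
  fun x y => [&& x \in S, y \in S & (child x y || child y x)].

Definition ornament (S : {set T}) : bool :=
  (S != set0) && [forall x in S, forall y in S, connect (adjIn S) x y].

Definition ornamentation (d : {ffun T -> {set T}}) : bool :=
  [forall v, ornament (d v)] &&
  [forall v, (v \in d v) && [forall x in d v, tle x v]] &&
  [forall v, forall v', [|| d v \subset d v', d v' \subset d v
                          | [disjoint d v & d v']]].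

Definition ole (d1 d2 : {ffun T -> {set T}}) : bool :=
  [forall v, d1 v \subset d2 v].
Definition olt (d1 d2 : {ffun T -> {set T}}) : bool :=
  (d1 != d2) && ole d1 d2.

Definition covby (d' d : {ffun T -> {set T}}) : bool :=
  [&& ornamentation d', ornamentation d, olt d' d &
      [forall e : {ffun T -> {set T}},
         ~~ [&& ornamentation e, olt d' e & olt e d]]].

(* Pop(d): meet (pointwise intersection) of d and its lower covers *)
Definition pop (d : {ffun T -> {set T}}) : {ffun T -> {set T}} :=
  [ffun v => d v :&: \bigcap_(d' | covby d' d) d' v].

Definition Delta (S : {set T}) (u : T) : {set T} := [set x in S | tle x u].

Definition wraps (d : {ffun T -> {set T}}) (v u : T) : bool :=
  [&& u != v, d u \subset d v &
      ~~ [exists x, (d u \proper d x) && (d x \proper d v)]].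

Definition reduction (d : {ffun T -> {set T}}) (v u : T) : {set T} :=
  d v :\: Delta (d v) u.

Definition M (d : {ffun T -> {set T}}) (v : T) : {set T} :=
  [set u | wraps d v u &&
     ~~ [exists u', wraps d v u' && (reduction d v u \proper reduction d v u')]].

Definition isbead (s : {ffun T -> {set T}}) (v w : T) (S : {set T}) : Prop :=
  exists x : T, [/\ S = s x, tle x w, x \notin s v &
    forall y : T, tle x y -> tle y w -> (y \in s v) \/ s y = [set y]].

End Orn.

From Pilot Require Import Defs.
From mathcomp Require Import all_boot.
Set Implicit Arguments. Unset Strict Implicit. Unset Printing Implicit Defensive.

(* The lower covers of an ornamentation d are exactly the reductions of one
   ornament d(v) by a node u of M_d(v); hence Pop(d)(v) is d(v) minus the
   nodes lying below some element of M_d(v), and Pop maps ornamentations to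
   ornamentations.  If u is in M_{Pop(r)}(v) and r(u) contained a node below
   u, some element b0 of M_r(u) would survive in Pop(r)(v) but not in
   Pop(r)(u); yet every node of Pop(r)(v) below u lies in Pop(r)(u), because
   u is a minimal wrapped node.  So r(u) = {u}.  The same two facts show that
   a node y of Pop(r)(v) that drops out of Pop(Pop(r))(v) is itself an
   element of M_{Pop(r)}(v), hence a singleton from then on.  Iterating, a
   node of delta(v) either stays in Pop^k(delta)(v) or has become a
   singleton ornament, which is what makes {u} a bead. *)

Section RootedTree.
Variables (T : finType) (t : rtree T).
Local Notation par := (parent t).
Local Notation tle := (tle t).

Lemma tleP x y : reflect (exists n, iter n par x = y) (tle x y).
Proof.
apply: (iffP idP) => [h|[n <-]]; last exact: fconnect_iter.
by exists (findex par x y); apply: iter_findex.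
Qed.

Lemma tle_refl x : tle x x.
Proof. exact: connect0. Qed.

Lemma tle_trans x y z : tle x y -> tle y z -> tle x z.
Proof. exact: connect_trans. Qed.

Lemma tle_par x : tle x (par x).
Proof. exact: fconnect1. Qed.

Lemma iter_par_root n : iter n par (Defs.root t) = Defs.root t.
Proof. by elim: n => //= n ->; rewrite parent_root. Qed.

(* A cycle x -> ... -> y -> ... -> x through a non-root x would never reach
   the root, whose orbit is the fixed point itself. *)
Lemma tle_anti x y : tle x y -> tle y x -> x = y.
Proof.
move=> /tleP [[|n] hn] /tleP [m hm]; first by [].
have [r hr] : exists r, iter r par x = Defs.root t by apply/tleP; apply: reach_root.
have cyc k : iter (k * (m + n.+1)) par x = x.
  by elim: k => // k IH; rewrite mulSn iterD IH iterD hn hm.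
have xroot : x = Defs.root t.
  rewrite -(cyc r) -(subnK (_ : r <= r * (m + n.+1))) ?iterD ?hr ?iter_par_root //.
  by rewrite addnS mulnS leq_addr.
by rewrite -hn xroot iter_par_root.
Qed.

Lemma tle_par_neq x y : tle x y -> x != y -> tle (par x) y.
Proof.
move=> /tleP [[|n] hn] hne; first by rewrite -hn eqxx in hne.
by apply/tleP; exists n; rewrite -iterSr.
Qed.

Lemma tle_total x a b : tle x a -> tle x b -> tle a b || tle b a.
Proof.
move=> /tleP [n <-] /tleP [m <-]; have [h|h] := leqP n m.
  by apply/orP; left; apply/tleP; exists (m - n); rewrite -iterD subnK.
by apply/orP; right; apply/tleP; exists (n - m); rewrite -iterD subnK // ltnW.
Qed.

Definition ornament_at (S : {set T}) v :=
  [/\ v \in S, forall x, x \in S -> tle x v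
    & forall x, x \in S -> x != v -> par x \in S].

Definition orn_spec (d : {ffun T -> {set T}}) :=
  (forall v, ornament_at (d v) v) /\
  (forall v v' x, x \in d v -> x \in d v' -> d v \subset d v' \/ d v' \subset d v).

Lemma adjIn_sym S : symmetric (adjIn t S).
Proof. by move=> x y; rewrite /adjIn andbCA orbC. Qed.

(* Along an adjIn-path from x up to v, the first step leaving the down-set
   of x must go to par x. *)
Lemma ornament_at_of_ornament S v : ornament t S -> v \in S ->
  (forall x, x \in S -> tle x v) -> ornament_at S v.
Proof.
move=> /andP [_ /forall_inP hc] hv hle; split => // x hx hxv.
have /connectP [p xv_path xv_last] := forall_inP (hc x hx) v hv.
suff walk q z : tle z x -> path (adjIn t S) z q -> v = last z q -> par x \in S.
  exact: walk p x (tle_refl x) xv_path xv_last.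
elim: q z => [|y q IH] z hzx /=.
  by move=> _ ezv; case/negP: hxv; apply/eqP; apply: tle_anti; [exact: hle | rewrite ezv].
case/andP => /and3P [hz hy /orP [] /andP [/eqP hpar hne]] hq hl.
  have [ezx|nzx] := eqVneq z x; first by rewrite -ezx hpar.
  by apply: IH hq hl; rewrite -hpar; apply: tle_par_neq.
by apply: IH hq hl; apply: tle_trans hzx; rewrite -hpar; apply: tle_par.
Qed.

Lemma connect_ornament_at S v x : ornament_at S v -> x \in S ->
  connect (adjIn t S) x v.
Proof.
case=> hv hle hcl hx; have /tleP [n hn] := hle x hx.
elim: n x hx hn => [|n IH] x hx hn; first by rewrite -hn connect0.
have [->|hne] := eqVneq x v; first exact: connect0.
have hpx := hcl x hx hne.
apply: (connect_trans (y := par x)); last by apply: IH => //; rewrite -iterSr.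
apply: connect1; rewrite /adjIn hx hpx /= /child eqxx /=.
apply/orP; left; apply: contra_neq hne => hfix.
have fixk k : iter k par x = x by elim: k => //= k ->; rewrite -hfix.
by rewrite -hn fixk.
Qed.

Lemma ornament_of_ornament_at S v : ornament_at S v -> ornament t S.
Proof.
move=> hS; have [hv _ _] := hS; apply/andP; split; first by apply/set0Pn; exists v.
apply/forall_inP => x hx; apply/forall_inP => y hy.
apply: connect_trans (connect_ornament_at hS hx) _.
by rewrite (sym_connect_sym (@adjIn_sym S)); apply: connect_ornament_at.
Qed.

Lemma ornamentationP d : ornamentation t d <-> orn_spec d.
Proof.
split.
  case/andP => /andP [/forallP h1 /forallP h2] /forallP h3; split.
    move=> v; have /andP [hv /forall_inP hle] := h2 v.
    exact: ornament_at_of_ornament (h1 v) hv hle.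
  move=> v v' x hx hx'; have /forallP/(_ v')/or3P [->|->|] := h3 v; auto.
  by move/disjointFr/(_ hx); rewrite hx'.
case=> hS hlam; apply/andP; split; first (apply/andP; split); apply/forallP => v.
- exact: ornament_of_ornament_at (hS v).
- by have [-> hle _] := hS v; apply/forall_inP.
- apply/forallP => v'; have [|hdis] := boolP [disjoint d v & d v']; first by rewrite !orbT.
  have [x] : exists x, x \in d v :&: d v' by apply/set0Pn; rewrite setI_eq0.
  by rewrite inE => /andP [hx hx']; case: (hlam v v' x hx hx') => ->; rewrite ?orbT.
Qed.

Section Ornamentation.
Variable d : {ffun T -> {set T}}.
Hypothesis hd : orn_spec d.

Lemma orn_self y : y \in d y.
Proof. by have [] := hd.1 y. Qed.

Lemma orn_le x y : x \in d y -> tle x y.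
Proof. by have [_ h _] := hd.1 y; apply: h. Qed.

Lemma orn_convex v a y : a \in d v -> tle a y -> tle y v -> y \in d v.
Proof.
have [hv _ hcl] := hd.1 v; move=> ha /tleP [n hn] hyv.
elim: n a ha hn => [|n IH] a ha hn; first by rewrite -hn.
have [eav|nav] := eqVneq a v; last by apply: IH (hcl a ha nav) _; rewrite -iterSr.
suff -> : y = v by [].
by apply: tle_anti hyv _; rewrite -hn eav; apply/tleP; exists n.+1.
Qed.

Lemma orn_nest x y : x \in d y -> d x \subset d y.
Proof.
move=> hx; case: (hd.2 x y x (orn_self x) hx) => // hs.
by rewrite (tle_anti (orn_le (subsetP hs _ (orn_self y))) (orn_le hx)).
Qed.

Lemma orn_proper a b : d a \subset d b -> a != b -> d a \proper d b.
Proof.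
move=> hs hne; apply/properP; split => //; exists b; first exact: orn_self.
apply: contra hne => hb; apply/eqP; apply: tle_anti (orn_le hb).
exact: orn_le (subsetP hs _ (orn_self a)).
Qed.

Lemma orn_singleton y : d y \subset [set y] -> d y = [set y].
Proof. by move=> hs; apply/eqP; rewrite eqEsubset hs sub1set orn_self. Qed.

Lemma wraps_mem v b : wraps d v b -> [/\ b \in d v, b != v, d b \subset d v & tle b v].
Proof.
case/and3P => hne hs _; have hb := subsetP hs _ (orn_self b).
by split => //; apply: orn_le.
Qed.

Lemma wraps_proper v b : wraps d v b -> d b \proper d v.
Proof. by case/wraps_mem => _ hne hs _; apply: orn_proper. Qed.

Lemma wraps_no_between v b y : wraps d v b -> d b \proper d y -> d y \proper d v -> False.
Proof. by case/and3P => _ _ /existsP hn p1 p2; apply: hn; exists y; rewrite p1 p2. Qed.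

Lemma wraps_cover a v : d a \subset d v -> a != v ->
  exists2 y, wraps d v y & d a \subset d y.
Proof.
move=> hs hne; pose P y := [&& d a \subset d y, d y \subset d v & y != v].
have Pa : P a by rewrite /P subxx hs hne.
have [y /and3P [h1 h2 h3] ymax] := @arg_maxnP _ a P (fun y => #|d y|) Pa.
exists y => //; apply/and3P; split => //; apply/existsP => -[x /andP [p1 p2]].
have Px : P x.
  rewrite /P (subset_trans h1 (proper_sub p1)) (proper_sub p2).
  by apply: contraTneq p2 => ->; rewrite properxx.
by have := ymax x Px; rewrite /= leqNgt (proper_card p1).
Qed.

(* d y would lie strictly between d b and d v, since it contains b. *)
Lemma wraps_inner v b y q : wraps d v b -> d y \proper d v -> q \in d y ->
  tle q b -> tle b y -> b = y.
Proof.
move=> hw hyv hq hqb hby; apply/eqP; apply/negPn/negP => hne.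
exact: wraps_no_between hw (orn_proper (orn_nest (orn_convex hq hqb hby)) hne) hyv.
Qed.

Lemma in_reduction v b z : (z \in reduction t d v b) = (z \in d v) && ~~ tle z b.
Proof. by rewrite /reduction /Delta !inE; case: (z \in d v); case: (tle z b). Qed.

Lemma reduction_proper v b b' : b \in d v -> b' \in d v ->
  (reduction t d v b \proper reduction t d v b') = tle b' b && (b' != b).
Proof.
move=> hb hb'; apply/idP/idP.
  case/properP => hs [z hz hnz].
  have hb'b : tle b' b.
    apply/negPn/negP => hn; have := subsetP hs b'.
    by rewrite !in_reduction hb' hn tle_refl andbF => /(_ isT).
  by rewrite hb'b; apply: contraNneq hnz => eb; rewrite -eb.
case/andP => hle hne; apply/properP; split.
  apply/subsetP => z; rewrite !in_reduction => /andP [-> hn].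
  by apply: contra hn => hzb'; apply: tle_trans hle.
exists b; last by rewrite in_reduction tle_refl andbF.
by rewrite in_reduction hb; apply: contra hne => hbb'; apply/eqP; apply: tle_anti.
Qed.

Lemma in_M v b : b \in M t d v <->
  wraps d v b /\ (forall b', wraps d v b' -> tle b' b -> b' = b).
Proof.
rewrite inE; split.
  case/andP => hw /existsPn hn; split => // b' hw' hle; apply/eqP.
  have := hn b'; rewrite hw' reduction_proper ?hle ?negbK //.
    by case/wraps_mem: hw.
  by case/wraps_mem: hw'.
case=> hw hmin; rewrite hw; apply/existsPn => b'; apply/negP => /andP [hw' hp].
move: hp; rewrite reduction_proper; [|by case/wraps_mem: hw|by case/wraps_mem: hw'].
by case/andP => hle; rewrite (hmin b' hw' hle) eqxx.
Qed.

Lemma M_below v w : wraps d v w -> exists2 b, b \in M t d v & tle b w.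
Proof.
move=> hw; pose P b := wraps d v b && tle b w.
have Pw : P w by rewrite /P hw tle_refl.
have [b /andP [hb hbw] bmin] := @arg_minnP _ w P (fun b => #|Delta t (d v) b|) Pw.
exists b => //; apply/in_M; split => // b' hw' hle.
have hsub : Delta t (d v) b' \subset Delta t (d v) b.
  by apply/subsetP => z; rewrite !inE => /andP [-> h]; apply: tle_trans hle.
have /eqP e : Delta t (d v) b' == Delta t (d v) b.
  by rewrite eqEcard hsub bmin // /P hw' (tle_trans hle hbw).
have : b \in Delta t (d v) b by rewrite inE tle_refl andbT; case/wraps_mem: hb.
by rewrite -e inE => /andP [_ /(tle_anti hle)].
Qed.

Lemma Delta_subset_M v b : b \in M t d v -> Delta t (d v) b \subset d b.
Proof.
case/in_M => hw hmin; have [_ hbnv _ hbv] := wraps_mem hw.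
apply/subsetP => y; rewrite inE => /andP [hy hyb].
have hyv : y != v.
  by apply: contraNneq hbnv => eyv; apply/eqP; apply: tle_anti hbv _; rewrite -eyv.
have [z hwz hyz] := wraps_cover (orn_nest hy) hyv.
have hyz' := subsetP hyz _ (orn_self y).
suff -> : b = z by [].
case/orP: (tle_total hyb (orn_le hyz')) => [hbz|hzb]; last exact/esym/hmin.
exact: wraps_inner hw (wraps_proper hwz) hyz' hyb hbz.
Qed.

End Ornamentation.

Definition reduce (d : {ffun T -> {set T}}) v b : {ffun T -> {set T}} :=
  [ffun y => if y == v then reduction t d v b else d y].

Lemma reduce_orn d v b : orn_spec d -> wraps d v b -> orn_spec (reduce d v b).
Proof.
move=> hd hw; have [_ hne _ hbv] := wraps_mem hd hw.
have hlam y z : y != v -> z \in reduction t d v b -> z \in d y ->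
    reduction t d v b \subset d y \/ d y \subset reduction t d v b.
  move=> hyv; rewrite in_reduction => /andP [hzv hzb] hzy.
  case: (hd.2 v y z hzv hzy) => hs.
    by left; apply: subset_trans hs; apply/subsetP => q; rewrite in_reduction => /andP [].
  right; apply/subsetP => q hq; rewrite in_reduction (subsetP hs _ hq).
  apply/negP => hqb; case/negP: hzb.
  have hyb : tle y b.
    case/orP: (tle_total (orn_le hd hq) hqb) => // hby.
    by rewrite (wraps_inner hd hw (orn_proper hd hs hyv) hq hqb hby) tle_refl.
  exact: tle_trans (orn_le hd hzy) hyb.
split=> [y|y y' z]; rewrite !ffunE.
  have [->|hyv] := eqVneq y v; last exact: hd.1.
  have [_ hle hcl] := hd.1 v; split.
  - rewrite in_reduction orn_self //.
    by apply: contra hne => hvb; apply/eqP; apply: tle_anti.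
  - by move=> z; rewrite in_reduction => /andP [/hle].
  - move=> z; rewrite !in_reduction => /andP [hz hzb] hzv; rewrite hcl //.
    by apply: contra hzb; apply: tle_trans (tle_par z).
case: eqVneq => [_|hyv]; case: eqVneq => [_|hy'v].
- by left.
- exact: hlam.
- by move=> hz hzR; case: (hlam y z hyv hzR hz); auto.
- exact: hd.2.
Qed.

Lemma reduce_olt d v b : orn_spec d -> wraps d v b -> olt (reduce d v b) d.
Proof.
move=> hd hw; have [hbv _ _ _] := wraps_mem hd hw; apply/andP; split.
  apply/negP => /eqP/(congr1 (fun f : {ffun T -> {set T}} => b \in f v)).
  by rewrite ffunE eqxx in_reduction tle_refl andbF hbv.
apply/forallP => y; rewrite ffunE; case: eqVneq => [->|_]; last exact: subxx.
by apply/subsetP => q; rewrite in_reduction => /andP [].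
Qed.

Lemma ole_anti (d1 d2 : {ffun T -> {set T}}) : ole d1 d2 -> ole d2 d1 -> d1 = d2.
Proof.
by move=> /forallP h1 /forallP h2; apply/ffunP => y; apply/eqP; rewrite eqEsubset h1 h2.
Qed.

(* Take v with e(v) != d(v) and d(v) of least size; a node z in d(v) but not
   e(v) lies in d(w) for some w wrapped by v, and e(w) = d(w) by minimality. *)
Lemma olt_M_notin d e : orn_spec d -> orn_spec e -> olt e d ->
  exists v b, b \in M t d v /\ b \notin e v.
Proof.
move=> hd he /andP [hne /forallP hle].
have [/existsP [v /existsP [b /andP [hb hbe]]]|/existsPn hM] :=
  boolP [exists v, exists b, (b \in M t d v) && (b \notin e v)]; first by exists v, b.
have {}hM v b : b \in M t d v -> b \in e v.
  by move=> hb; have /existsPn/(_ b) := hM v; rewrite hb negbK.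
case/negP: hne; apply/eqP/ffunP => y0; apply/eqP; apply/negPn/negP => hy0.
have [v hv vmin] := @arg_minnP _ y0 (fun v => e v != d v) (fun v => #|d v|) hy0.
have [z hz hnz] : exists2 z, z \in d v & z \notin e v.
  by apply/subsetPn; move: hv; rewrite eqEsubset hle.
have hzv : z != v by apply: contraNneq hnz => ->; apply: orn_self.
have [w hw hzw] := wraps_cover (orn_nest hd hz) hzv.
have [b hb hbw] := M_below hd hw.
have [_ _ _ hwv] := wraps_mem hd hw.
have hwe : w \in e v := orn_convex he (hM v b hb) hbw hwv.
have hew : e w = d w.
  apply/eqP; apply/negPn/negP => hw'; have := vmin w hw'.
  by rewrite leqNgt (proper_card (wraps_proper hd hw)).
case/negP: hnz; apply: subsetP (orn_nest he hwe) _ _; rewrite hew.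
exact: subsetP hzw _ (orn_self hd z).
Qed.

Lemma ole_reduce d e v b : orn_spec d -> orn_spec e -> ole e d ->
  b \in d v -> b \notin e v -> ole e (reduce d v b).
Proof.
move=> hd he /forallP hle hbv hbe; apply/forallP => y; rewrite ffunE.
case: eqVneq => [->|_]; last exact: hle.
apply/subsetP => z hz; rewrite in_reduction (subsetP (hle v) _ hz).
by apply: contra hbe => hzb; exact: (orn_convex he hz hzb (orn_le hd hbv)).
Qed.

Lemma covby_reduce d v b : orn_spec d -> b \in M t d v -> covby t (reduce d v b) d.
Proof.
move=> hd hb; have [hw hmin] := (in_M hd v b).1 hb.
have [hbv _ _ _] := wraps_mem hd hw.
apply/and4P; split; [exact/ornamentationP/reduce_orn | exact/ornamentationP
  | exact: reduce_olt |].
apply/forallP => e; apply/negP.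
case/and3P => /ornamentationP he /andP [hne /forallP hle1] hlt2.
have [v' [b' [hb' hb'e]]] := olt_M_notin hd he hlt2.
have [hb'v' _ _ _] := wraps_mem hd ((in_M hd v' b').1 hb').1.
have [ev|nv] := eqVneq v' v; last first.
  by case/negP: hb'e; apply: subsetP (hle1 v') _ _; rewrite ffunE (negbTE nv).
subst v'; have eb : b' = b.
  apply: hmin ((in_M hd v b').1 hb').1 _; apply/negPn; apply: contra hb'e => hn.
  by apply: subsetP (hle1 v) _ _; rewrite ffunE eqxx in_reduction hb'v'.
subst b'; case/negP: hne; apply/eqP/ole_anti; first exact/forallP.
exact: ole_reduce hd he (andP hlt2).2 hbv hb'e.
Qed.

Lemma covby_reduce_inv d e : orn_spec d -> covby t e d ->
  exists v b, b \in M t d v /\ e = reduce d v b.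
Proof.
move=> hd /and4P [/ornamentationP he _ hlt /forallP hc].
have [v [b [hb hbe]]] := olt_M_notin hd he hlt.
exists v, b; split => //; have [hw _] := (in_M hd v b).1 hb.
have [hbv _ _ _] := wraps_mem hd hw.
have hle := ole_reduce hd he (andP hlt).2 hbv hbe.
have /ornamentationP hro := reduce_orn hd hw.
apply/eqP; apply: contraT => hne; have := hc (reduce d v b).
by rewrite hro reduce_olt // andbT /olt hne hle.
Qed.

Lemma in_pop d y z : orn_spec d ->
  z \in pop t d y <-> z \in d y /\ (forall b, b \in M t d y -> ~~ tle z b).
Proof.
move=> hd; rewrite ffunE inE; split.
  case/andP => hz /bigcapP hc; split => // b hb.
  by have := hc _ (covby_reduce hd hb); rewrite ffunE eqxx in_reduction => /andP [].
case=> hz hb; rewrite hz; apply/bigcapP => e he.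
have [v [b [hb' ->]]] := covby_reduce_inv hd he; rewrite ffunE.
by case: eqVneq => [eyv|//]; subst v; rewrite in_reduction hz hb.
Qed.

Lemma pop_sub d y : pop t d y \subset d y.
Proof. by apply/subsetP => z; rewrite ffunE inE => /andP []. Qed.

Lemma pop_orn d : orn_spec d -> orn_spec (pop t d).
Proof.
move=> hd.
have hlam y y' a : d y \subset d y' -> a \in pop t d y -> a \in pop t d y' ->
    pop t d y \subset pop t d y'.
  move=> hs ha ha'; have [<-|hne] := eqVneq y y'; first exact: subxx.
  have [hay _] := (in_pop y a hd).1 ha; have [_ ha'M] := (in_pop y' a hd).1 ha'.
  apply/subsetP => q /(in_pop _ _ hd) [hqy _]; apply/(in_pop _ _ hd).
  split=> [|b hb]; first exact: subsetP hs _ hqy.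
  apply/negP => hqb; have [hwb _] := (in_M hd y' b).1 hb.
  have hyb : tle y b.
    case/orP: (tle_total (orn_le hd hqy) hqb) => // hby.
    by rewrite (wraps_inner hd hwb (orn_proper hd hs hne) hqy hqb hby) tle_refl.
  by have := ha'M b hb; rewrite (tle_trans (orn_le hd hay) hyb).
split=> [y|y y' a ha ha'].
  have [hy hle hcl] := hd.1 y; split.
  - apply/(in_pop _ _ hd); split=> // b /(in_M hd) [hw _].
    have [_ hne _ hby] := wraps_mem hd hw.
    by apply: contra hne => hyb; apply/eqP; apply: tle_anti.
  - by move=> x /(subsetP (pop_sub d y)); apply: hle.
  - move=> x /(in_pop _ _ hd) [hx hxM] hxy; apply/(in_pop _ _ hd).
    split=> [|b hb]; first exact: hcl.
    by apply: contra (hxM b hb); apply: tle_trans (tle_par x).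
have hay := subsetP (pop_sub d y) _ ha; have hay' := subsetP (pop_sub d y') _ ha'.
case: (hd.2 y y' a hay hay') => hs; first by left; apply: hlam ha ha'.
by right; apply: hlam ha' ha.
Qed.

Lemma pop_singleton d y : orn_spec d -> d y = [set y] -> pop t d y = [set y].
Proof. by move=> hd hy; apply: (orn_singleton (pop_orn hd)); rewrite -hy pop_sub. Qed.

Lemma M_pop_singleton r v u : orn_spec r -> u \in M t (pop t r) v -> r u = [set u].
Proof.
move=> hr hu; have hs := pop_orn hr.
apply: (orn_singleton hr); apply/subsetP => z hz; rewrite inE; apply/negPn/negP => hzu.
have [w hw _] := wraps_cover (orn_nest hr hz) hzu.
have [b0 hb0 _] := M_below hr hw.
have [hb0u _ _ hb0le] := wraps_mem hr ((in_M hr u b0).1 hb0).1.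
have [huv hunv _ _] := wraps_mem hs ((in_M hs v u).1 hu).1.
have [huv_r huM] := (in_pop _ _ hr).1 huv.
have hruv := orn_proper hr (orn_nest hr huv_r) hunv.
have hb0v : b0 \in pop t r v.
  apply/(in_pop _ _ hr); split=> [|b hb]; first exact: subsetP (proper_sub hruv) _ hb0u.
  apply/negP => hb0b; case/negP: (huM b hb); have [hwb _] := (in_M hr v b).1 hb.
  case/orP: (tle_total hb0b hb0le) => // hbu.
  by rewrite (wraps_inner hr hwb hruv hb0u hb0b hbu) tle_refl.
have : b0 \in pop t r u.
  by apply: subsetP (Delta_subset_M hs hu) _ _; rewrite inE hb0v hb0le.
by case/(in_pop _ _ hr) => _ /(_ b0 hb0); rewrite tle_refl.
Qed.

Lemma pop_pop_or_singleton r v y : orn_spec r -> y \in pop t r v ->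
  y \in pop t (pop t r) v \/ pop t (pop t r) y = [set y].
Proof.
move=> hr hy; have hs := pop_orn hr.
have [|hyn] := boolP (y \in pop t (pop t r) v); [by left | right].
have /exists_inP [b hb hyb] : [exists b in M t (pop t r) v, tle y b].
  by apply: contraNT hyn => /exists_inPn hn; apply/(in_pop _ _ hs).
have hsb := pop_singleton hr (M_pop_singleton hr hb).
have : y \in pop t r b by apply: subsetP (Delta_subset_M hs hb) _ _; rewrite inE hy.
by rewrite hsb inE => /eqP ->; apply: pop_singleton.
Qed.

Lemma iter_pop_orn d j : orn_spec d -> orn_spec (iter j (pop t) d).
Proof. by move=> hd; elim: j => //= j; apply: pop_orn. Qed.

Lemma iter_pop_sub d j y : iter j (pop t) d y \subset d y.
Proof. by elim: j => [|j IH] /=; [exact: subxx | exact: subset_trans (pop_sub _ y) IH]. Qed.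

Lemma iter_pop_or_singleton r v y j : orn_spec r -> y \in pop t r v ->
  y \in iter j (pop t) (pop t r) v \/ iter j (pop t) (pop t r) y = [set y].
Proof.
move=> hr hy; have e i : iter i (pop t) (pop t r) = pop t (iter i (pop t) r).
  by rewrite -iterSr iterS.
elim: j => [|j IH]; first by left.
have hrj := iter_pop_orn j hr; rewrite iterS !e; rewrite e in IH.
case: IH => [|h]; first exact: pop_pop_or_singleton.
by right; apply: pop_singleton (pop_orn hrj) h.
Qed.

End RootedTree.

Theorem lemma5p2 (T : finType) (t : rtree T) (d : {ffun T -> {set T}})
  (hd : exists d0, ornamentation t d0 /\ d = pop t d0) (v u : T)
  (hu : u \in M t d v) :
  d u = [set u] /\
  (forall w : T, child t w v -> w \in d v -> u \in Delta t (d v) w ->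
     forall k : nat, 1 <= k -> w \in iter k (pop t) d v ->
       isbead t (iter k (pop t) d) v w [set u]).
Proof.
case: hd hu => d0 [/ornamentationP h0 ->] hu; have hs := pop_orn h0.
have hdu := pop_singleton h0 (M_pop_singleton h0 hu).
split=> // w /andP [/eqP hwv _] _; rewrite inE => /andP [huv huw] k hk _.
have hwv' : tle t w v by rewrite -hwv tle_par.
exists u; split=> //.
- by apply/esym/orn_singleton; [exact: iter_pop_orn | rewrite -hdu iter_pop_sub].
- case: k hk => // k _; rewrite iterSr; apply/negP => /(subsetP (iter_pop_sub _ _ _ _)).
  by case/(in_pop _ _ hs) => _ /(_ u hu); rewrite tle_refl.
- move=> y huy hyw; apply: iter_pop_or_singleton h0 _.
  exact: (orn_convex hs huv huy (tle_trans hyw hwv')).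
Qed.
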